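(* Let $\mathcal{A}\in\mathbb{R}^{n_1\times n_2\times n_3}$ be nonzero, and let $\mathcal{A}=\mathcal{U}*\mathcal{S}*\mathcal{V}^*$ be its t-SVD, with singular values in each Fourier-domain slice ordered nonincreasingly, so that $\mathcal{S}(1,1,:)\neq 0$. Define the rank-one tensor $$\mathcal{M}_1=\mathcal{U}(:,1,:)*\frac{\mathcal{S}(1,1,:)}{\|\mathcal{S}(1,1,:)\|_F}*\mathcal{V}(:,1,:)^*.$$ Then $$\langle \mathcal{M}_1,\mathcal{A}\rangle\;\ge\;\frac{\|\mathcal{A}\|_F}{\sqrt{\min(n_1,n_2)}}.$$
   Context: For $\mathcal{A}\in\mathbb{R}^{n_1\times n_2\times n_3}$, $\hat{\mathcal{A}}$ denotes the discrete Fourier transform of $\mathcal{A}$ along the third dimension (applied to every tube $\mathcal{A}(i,j,:)$), with frontal slices $\hat A^{(k)}=\hat{\mathcal{A}}(:,:,k)$. The t-product $\mathcal{A}*\mathcal{B}$ of $\mathcal{A}\in\mathbb{R}^{n_1\times n_2\times n_3}$ and $\mathcal{B}\in\mathbb{R}^{n_2\times l\times n_3}$ is the $n_1\times l\times n_3$ tensor whose Fourier-domain frontal slices are the matrix products $\hat A^{(k)}\hat B^{(k)}$, $k=1,\dots,n_3$ (equivalently, fold(bcirc($\mathcal{A}$)·unfold($\mathcal{B}$))). The conjugate transpose $\mathcal{A}^*$ is obtained by conjugate-transposing each frontal slice and reversing the order of frontal slices $2,\dots,n_3$. A tensor is f-diagonal if each frontal slice is diagonal. The t-SVD is $\mathcal{A}=\mathcal{U}*\mathcal{S}*\mathcal{V}^*$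 with $\mathcal{U},\mathcal{V}$ orthogonal ($\mathcal{Q}^**\mathcal{Q}=\mathcal{Q}*\mathcal{Q}^*=\mathcal{I}$, where $\mathcal{I}$ has the identity as first frontal slice and zero elsewhere) and $\mathcal{S}$ f-diagonal; it is obtained from SVDs $\hat A^{(k)}=\hat U^{(k)}\hat S^{(k)}\hat V^{(k)*}$ of the Fourier slices, with the diagonal entries of each $\hat S^{(k)}$ in nonincreasing order. $\langle\cdot,\cdot\rangle$ is the entrywise (Frobenius) inner product and $\|\cdot\|_F$ its norm. *)

From HB Require Import structures.
From mathcomp Require Import all_boot all_order all_algebra.
From mathcomp Require Import complex reals trigo.
Set Implicit Arguments. Unset Strict Implicit. Unset Printing Implicit Defensive.
Import Order.TTheory GRing.Theory Num.Theory.
Local Open Scope ring_scope.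

(* A third-order tensor of size n1 x n2 x n3 (indices are 0-based). *)
Definition tensor (T : Type) (n1 n2 n3 : nat) := 'I_n1 -> 'I_n2 -> 'I_n3 -> T.

Definition osub (n : nat) (k t : 'I_n) : 'I_n :=
  Ordinal (ltn_pmod (k + n - t) (leq_ltn_trans (leq0n k) (ltn_ord k))).

Definition oneg (n : nat) (k : 'I_n) : 'I_n :=
  Ordinal (ltn_pmod (n - k) (leq_ltn_trans (leq0n k) (ltn_ord k))).

(* t-product: fold(bcirc(A) * unfold(B)); frontal slice k of A*B is
   sum_t A^(k - t mod n3) B^(t). *)
Definition tprod (R : pzRingType) (n1 n2 l n3 : nat)
  (A : tensor R n1 n2 n3) (B : tensor R n2 l n3) : tensor R n1 l n3 :=
  fun i j k => \sum_(p < n2) \sum_(t < n3) A i p (osub k t) * B p j t.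

(* conjugate transpose of a real tensor: transpose each frontal slice and
   reverse the order of frontal slices 2..n3 (0-based: slice k -> slice -k). *)
Definition tconj (R : Type) (n1 n2 n3 : nat) (A : tensor R n1 n2 n3)
  : tensor R n2 n1 n3 :=
  fun j i k => A i j (oneg k).

Definition tid (R : pzRingType) (n n3 : nat) : tensor R n n n3 :=
  fun i j k => ((i == j) && (val k == 0%N))%:R.

Definition torthogonal (R : pzRingType) (n n3 : nat) (Q : tensor R n n n3) :=
  (forall i j k, tprod (tconj Q) Q i j k = @tid R n n3 i j k) /\
  (forall i j k, tprod Q (tconj Q) i j k = @tid R n n3 i j k).

Definition fdiag (R : pzRingType) (n1 n2 n3 : nat) (S : tensor R n1 n2 n3) :=
  forall i j k, val i <> val j -> S i j k = 0.

(* omega = exp(-2 pi i / n3) *)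
Definition omega (R : realType) (n3 : nat) : R[i] :=
  Complex (cos (2 * pi / n3%:R)) (- sin (2 * pi / n3%:R)).

Definition tdft (R : realType) (n1 n2 n3 : nat) (A : tensor R n1 n2 n3)
  : tensor R[i] n1 n2 n3 :=
  fun i j k => \sum_(t < n3) Complex (A i j t) 0 * omega R n3 ^+ (k * t).

Definition tinner (R : pzRingType) (n1 n2 n3 : nat) (A B : tensor R n1 n2 n3) : R :=
  \sum_(i < n1) \sum_(j < n2) \sum_(k < n3) A i j k * B i j k.

Definition tfro (R : rcfType) (n1 n2 n3 : nat) (A : tensor R n1 n2 n3) : R :=
  Num.sqrt (tinner A A).

(* t-SVD A = U * S * V^*: U, V orthogonal, S f-diagonal, and in every
   Fourier-domain frontal slice the diagonal entries of hat S (the singular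
   values of hat A^(k)) are real, nonnegative and nonincreasing. *)
Definition tSVD (R : realType) (n1 n2 n3 : nat) (A : tensor R n1 n2 n3)
  (U : tensor R n1 n1 n3) (S : tensor R n1 n2 n3) (V : tensor R n2 n2 n3) :=
  [/\ torthogonal U, torthogonal V, fdiag S,
      (forall i j k, A i j k = tprod (tprod U S) (tconj V) i j k) &
   (
      (forall (i : 'I_n1) (j : 'I_n2) k, val i = val j -> 0 <= tdft S i j k) /\
      (forall (i i' : 'I_n1) (j j' : 'I_n2) k,
          val i = val j -> val i' = val j' -> (val i <= val i')%N ->
          tdft S i' j' k <= tdft S i j k))].

Definition lslice (T : Type) (n m n3 : nat) (Q : tensor T n m n3) (c : 'I_m)
  : tensor T n 1 n3 := fun i _ k => Q i c k.

Definition ttube (T : Type) (n1 n2 n3 : nat) (A : tensor T n1 n2 n3)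
  (i : 'I_n1) (j : 'I_n2) : tensor T 1 1 n3 := fun _ _ k => A i j k.

(* The t-product is associative, tid is a two-sided
      identity, and tconj is the adjoint for the Frobenius inner product:
      <X * Y, Z> = <X, Z * Y^*> = <Y, X^* * Z>.  With U^* * U = V^* * V = I
      this gives <U(:,i) * X * V(:,j)^*, A> = <X, S(i,j,:)> and
      <A, A> = <S, S>.  Taking X = s / ||s|| with s = S(1,1,:) yields
      <M1, A> = ||s||.
   2. Fourier analysis.  The DFT matrix has orthogonal columns, hence the
      Parseval identity sum_k |hat a_k|^2 = n3 sum_t a_t^2.  Since the
      Fourier spectra of the diagonal tubes are nonnegative and dominated
      by that of s, every diagonal tube has squared norm at most ||s||^2.
   3. Counting.  S is f-diagonal with min(n1, n2) diagonal tubes, so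
      ||A||^2 = ||S||^2 <= min(n1, n2) ||s||^2, which is the claim. *)
From HB Require Import structures.
From mathcomp Require Import all_boot all_order all_algebra.
From mathcomp Require Import complex reals trigo.
From mathcomp Require Import ring lra zify.
From Stdlib Require Import FunctionalExtensionality.
Set Implicit Arguments. Unset Strict Implicit. Unset Printing Implicit Defensive.
Import Order.TTheory GRing.Theory Num.Theory.
Local Open Scope ring_scope.

Lemma osubE m (k t : 'I_m.+1) : osub k t = (k - t)%R.
Proof. apply: val_inj => /=; rewrite modnDmr addnBA //; exact: ltnW. Qed.

Lemma onegE m (k : 'I_m.+1) : oneg k = (- k)%R.
Proof. by apply: val_inj. Qed.

Lemma tensorP (T : Type) n1 n2 n3 (X Y : tensor T n1 n2 n3) :
  (forall i j k, X i j k = Y i j k) -> X = Y.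
Proof.
move=> eXY; apply: functional_extensionality => i.
apply: functional_extensionality => j; apply: functional_extensionality => k.
exact: eXY.
Qed.

Section TProductAlgebra.
Variable R : comPzRingType.
Variable m : nat.
Local Notation N := m.+1.

Lemma tprodE n1 n2 l (X : tensor R n1 n2 N) (Y : tensor R n2 l N) i j k :
  tprod X Y i j k = \sum_(p < n2) \sum_(t < N) X i p (k - t)%R * Y p j t.
Proof. by apply: eq_bigr => p _; apply: eq_bigr => t _; rewrite osubE. Qed.

Lemma tprodA n1 n2 n3 n4 (X : tensor R n1 n2 N) (Y : tensor R n2 n3 N)
  (Z : tensor R n3 n4 N) :
  tprod (tprod X Y) Z = tprod X (tprod Y Z).
Proof.
apply: tensorP => i j k; rewrite !tprodE.
transitivity (\sum_(p < n2) \sum_(q < n3) \sum_(t < N) \sum_(s < N)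
   X i p (k - (s + t))%R * Y p q s * Z q j t).
  under eq_bigr do under eq_bigr do rewrite tprodE big_distrl /=.
  under eq_bigr do rewrite exchange_big /=.
  rewrite exchange_big /=.
  apply: eq_bigr => p _; apply: eq_bigr => q _; apply: eq_bigr => t _.
  rewrite big_distrl /=; apply: eq_bigr => s _.
  by rewrite [s + t]addrC opprD addrA.
apply: eq_bigr => p _; symmetry.
under eq_bigr do rewrite tprodE big_distrr /=.
under eq_bigr do under eq_bigr do rewrite big_distrr /=.
rewrite exchange_big /=; apply: eq_bigr => q _.
rewrite exchange_big /=; apply: eq_bigr => t _.
rewrite (reindex_inj (addIr t)) /=; apply: eq_bigr => s _.
by rewrite addrK mulrA.
Qed.

Lemma tinner_tprodr n1 n2 l (X : tensor R n1 n2 N) (Y : tensor R n2 l N)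
  (Z : tensor R n1 l N) :
  tinner (tprod X Y) Z = tinner X (tprod Z (tconj Y)).
Proof.
rewrite /tinner; apply: eq_bigr => i _.
transitivity (\sum_(p < n2) \sum_(j < l) \sum_(t < N) \sum_(u < N)
   X i p u * Y p j t * Z i j (u + t)%R).
  under eq_bigr do under eq_bigr do rewrite tprodE big_distrl /=.
  under eq_bigr do rewrite exchange_big /=.
  rewrite exchange_big /=; apply: eq_bigr => p _; apply: eq_bigr => j _.
  under eq_bigr do rewrite big_distrl /=.
  rewrite exchange_big /=; apply: eq_bigr => t _.
  rewrite (reindex_inj (addIr t)) /=; apply: eq_bigr => u _.
  by rewrite addrK.
symmetry; apply: eq_bigr => p _.
under eq_bigr do rewrite tprodE big_distrr /=.
rewrite exchange_big /=; apply: eq_bigr => j _.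
under eq_bigr do rewrite big_distrr /=.
rewrite exchange_big /= (reindex_inj (@oppr_inj _)) /=.
apply: eq_bigr => t _; apply: eq_bigr => u _.
by rewrite /tconj onegE !opprK [Z _ _ _ * _]mulrC mulrA.
Qed.

Lemma tinner_tprodl n1 n2 l (X : tensor R n1 n2 N) (Y : tensor R n2 l N)
  (Z : tensor R n1 l N) :
  tinner (tprod X Y) Z = tinner Y (tprod (tconj X) Z).
Proof.
rewrite /tinner.
transitivity (\sum_(p < n2) \sum_(j < l) \sum_(t < N) \sum_(i < n1)
   \sum_(k < N) X i p (k - t)%R * Y p j t * Z i j k).
  under eq_bigr do under eq_bigr do under eq_bigr do
    rewrite tprodE big_distrl /=.
  under eq_bigr do under eq_bigr do rewrite exchange_big /=.
  under eq_bigr do rewrite exchange_big /=.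
  rewrite exchange_big /=; apply: eq_bigr => p _.
  rewrite exchange_big /=; apply: eq_bigr => j _.
  under eq_bigr do under eq_bigr do rewrite big_distrl /=.
  under eq_bigr do rewrite exchange_big /=.
  by rewrite exchange_big.
apply: eq_bigr => p _; apply: eq_bigr => j _; apply: eq_bigr => t _.
rewrite tprodE big_distrr /=; apply: eq_bigr => i _.
rewrite big_distrr /=; apply: eq_bigr => k _.
by rewrite /tconj onegE opprB mulrCA mulrA.
Qed.

Lemma tprod_tid n1 n2 (X : tensor R n1 n2 N) : tprod X (@tid R n2 N) = X.
Proof.
apply: tensorP => i j k.
rewrite tprodE (bigD1 j) //= [X in _ + X]big1 ?addr0; last first.
  by move=> p /negbTE pj; apply: big1 => t _; rewrite /tid pj mulr0.
rewrite (bigD1 0) //= [X in _ + X]big1 ?addr0; last first.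
  move=> t t0; rewrite /tid eqxx /=.
  by rewrite (_ : (val t == 0%N) = false) ?mulr0 //; apply/negbTE.
by rewrite /tid eqxx /= subr0 mulr1.
Qed.

Lemma tid_tprod n1 n2 (X : tensor R n1 n2 N) : tprod (@tid R n1 N) X = X.
Proof.
apply: tensorP => i j k.
rewrite tprodE (bigD1 i) //= [X in _ + X]big1 ?addr0; last first.
  by move=> p /negbTE pi; apply: big1 => t _; rewrite /tid eq_sym pi mul0r.
rewrite (bigD1 k) //= [X in _ + X]big1 ?addr0; last first.
  move=> t tk; rewrite /tid eqxx /=.
  rewrite (_ : (val (k - t) == 0%N) = false) ?mul0r //.
  by apply/negbTE; rewrite -[0%N]/(val (0 : 'I_N)) val_eqE subr_eq0 eq_sym.
by rewrite subrr /tid eqxx /= mul1r.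
Qed.

Lemma tconjK n1 n2 (X : tensor R n1 n2 N) : tconj (tconj X) = X.
Proof. by apply: tensorP => i j k; rewrite /tconj !onegE opprK. Qed.

Lemma tprod_lslice n1 n2 l (X : tensor R n1 n2 N) (Y : tensor R n2 l N) c :
  tprod X (lslice Y c) = lslice (tprod X Y) c.
Proof. by []. Qed.

End TProductAlgebra.

Section FourierAnalysis.
Variable R : realType.
Variable m : nat.
Local Notation N := m.+1.
Local Notation w := (omega R N).
Let theta : R := 2 * pi / N%:R.

Lemma omegaX d : w ^+ d = Complex (cos (d%:R * theta)) (- sin (d%:R * theta)).
Proof.
elim: d => [|d IH]; first by rewrite expr0 mul0r cos0 sin0 oppr0.
rewrite exprSr IH /omega -/theta /=; simpc.
by rewrite -nat1r mulrDl mul1r cosD sinD; congr Complex; ring.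
Qed.

Lemma omega_root : w ^+ N = 1.
Proof.
rewrite omegaX /theta mulrCA mulrC divff ?mul1r ?pnatr_eq0 //.
by rewrite mulr_natl cos2pi sin2pi oppr0.
Qed.

(* w is a primitive N-th root of unity: 0 < d < N forces d theta/2 into
   (0, pi), where sin is positive, so cos (d theta) < 1. *)
Lemma omega_prim d : (0 < d < N)%N -> w ^+ d != 1.
Proof.
move=> /andP [d0 dN]; rewrite omegaX.
set x := d%:R * theta.
have hx : 0 < x / 2 < pi.
  have -> : x / 2 = (d%:R / N%:R) * pi.
    by rewrite /x /theta; field; rewrite addrC natr1 pnatr_eq0.
  have h1 : 0 < d%:R / N%:R :> R by rewrite divr_gt0 // ltr0n.
  have h2 : d%:R / N%:R < 1 :> R by rewrite ltr_pdivrMr ?ltr0n // mul1r ltr_nat.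
  have hp : 0 < pi :> R := pi_gt0 R.
  set q := d%:R / N%:R in h1 h2 *; apply/andP; split; nra.
have hc : cos x < 1.
  rewrite [x]splitr cosD -!expr2 cos2sin2.
  have : 0 < sin (x / 2) ^+ 2 by rewrite exprn_gt0 // sin_gt0_pi.
  rewrite expr2; nra.
by apply/negP => /eqP [] hc1 _; move: hc; rewrite hc1 ltxx.
Qed.

Lemma omega_conj : w * conjc w = 1.
Proof. by rewrite /omega /conjc; simpc; rewrite -!expr2 cos2Dsin2 mulrC subrr. Qed.

Lemma sum_root_unity (z : R[i]) :
  z ^+ N = 1 -> z != 1 -> \sum_(k < N) z ^+ k = 0.
Proof.
move=> hz hz1; have := subrX1 z N; rewrite hz subrr => /esym /eqP.
by rewrite mulf_eq0 subr_eq0 (negbTE hz1) /= => /eqP.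
Qed.

Lemma omega_orthogonal (t s : 'I_N) :
  \sum_(k < N) w ^+ (k * t) * conjc w ^+ (k * s) = ((t == s) * N)%:R.
Proof.
have root_diff (a b : 'I_N) : (a < b)%N -> (w ^+ (b - a)) ^+ N = 1 /\
    w ^+ (b - a) != 1.
  move=> ab; rewrite -exprM mulnC exprM omega_root expr1n; split => //.
  by apply: omega_prim; rewrite subn_gt0 ab /= (leq_ltn_trans (leq_subr _ _)).
case: (ltngtP t s) => hts.
- rewrite (_ : (t == s) = false) ?mul0n; last by apply/negbTE; rewrite neq_ltn hts.
  have [h1 h2] := root_diff _ _ hts.
  transitivity (\sum_(k < N) conjc ((w ^+ (s - t)) ^+ k)).
    apply: eq_bigr => k _.
    rewrite (_ : k * s = k * (s - t) + k * t)%N ?exprD; last first.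
      by rewrite -mulnDr subnK // ltnW.
    rewrite mulrCA -exprMn omega_conj expr1n mulr1.
    by rewrite !rmorphXn -exprM mulnC.
  by rewrite -rmorph_sum sum_root_unity ?rmorph0.
- rewrite (_ : (t == s) = false) ?mul0n; last first.
    by apply/negbTE; rewrite neq_ltn hts orbT.
  have [h1 h2] := root_diff _ _ hts.
  transitivity (\sum_(k < N) (w ^+ (t - s)) ^+ k); last exact: sum_root_unity.
  apply: eq_bigr => k _.
  rewrite (_ : k * t = k * (t - s) + k * s)%N ?exprD; last first.
    by rewrite -mulnDr subnK // ltnW.
  by rewrite -mulrA -exprMn omega_conj expr1n mulr1 -exprM mulnC.
- rewrite (val_inj hts) eqxx mul1n.
  under eq_bigr do rewrite -exprMn omega_conj expr1n.
  by rewrite sumr_const card_ord.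
Qed.

Definition dft (a : 'I_N -> R) (k : 'I_N) : R[i] :=
  \sum_(t < N) Complex (a t) 0 * w ^+ (k * t).

Lemma parseval (a : 'I_N -> R) :
  \sum_(k < N) dft a k * conjc (dft a k) = ((N%:R * \sum_(t < N) a t ^+ 2)%:C)%C.
Proof.
transitivity (\sum_(t < N) \sum_(s < N) Complex (a t) 0 * Complex (a s) 0 *
   \sum_(k < N) w ^+ (k * t) * conjc w ^+ (k * s)).
  under eq_bigr do rewrite /dft rmorph_sum big_distrl /=.
  under eq_bigr do under eq_bigr do rewrite big_distrr /=.
  rewrite exchange_big /=; apply: eq_bigr => t _.
  rewrite exchange_big /=; apply: eq_bigr => s _.
  rewrite big_distrr /=; apply: eq_bigr => k _.
  rewrite rmorphM rmorphXn /= oppr0.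
  by rewrite -!mulrA; congr (_ * _); rewrite mulrCA.
transitivity (\sum_(t < N) Complex (a t) 0 * Complex (a t) 0 * N%:R).
  apply: eq_bigr => t _.
  rewrite (bigD1 t) //= [X in _ + X]big1 ?addr0; last first.
    by move=> s /negbTE ts; rewrite omega_orthogonal eq_sym ts mul0n mulr0.
  by rewrite omega_orthogonal eqxx mul1n.
rewrite rmorphM rmorph_sum /= mulr_sumr; apply: eq_bigr => t _.
by rewrite rmorph_nat rmorphXn mulrC expr2.
Qed.

Lemma conj_ge0 (z : R[i]) : 0 <= z -> conjc z = z.
Proof. by move=> hz; have := ger0_Im hz; case: z {hz} => a b /= ->; rewrite oppr0. Qed.

Lemma dft_energy_le (a b : 'I_N -> R) :
  (forall k, 0 <= dft a k) -> (forall k, dft a k <= dft b k) ->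
  \sum_(t < N) a t ^+ 2 <= \sum_(t < N) b t ^+ 2.
Proof.
move=> a_ge0 ab.
have : \sum_(k < N) dft a k * conjc (dft a k)
         <= \sum_(k < N) dft b k * conjc (dft b k).
  apply: ler_sum => k _; have b_ge0 := le_trans (a_ge0 k) (ab k).
  by rewrite !conj_ge0 // ler_pM.
by rewrite !parseval lecR ler_pM2l // ltr0n.
Qed.

End FourierAnalysis.

Lemma card_diag (n1 n2 : nat) :
  (\sum_(i < n1) \sum_(j < n2) (val i == val j) = minn n1 n2)%N.
Proof.
have row (i n : nat) : (\sum_(j < n) (i == j) = (i < n))%N.
  elim: n => [|n IH]; first by rewrite big_ord0.
  rewrite big_ord_recr /= IH ltnS.
  by case: (ltngtP i n) => h //=; rewrite ?h ?(ltnW h) ?leqNgt ?h.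
under eq_bigr do rewrite row.
elim: n1 => [|n IH]; first by rewrite big_ord0 min0n.
rewrite big_ord_recr /= IH !minnE; case: (ltnP n n2) => /= h; lia.
Qed.

Lemma tinner_ge0 (R : realDomainType) n1 n2 n3 (X : tensor R n1 n2 n3) :
  0 <= tinner X X.
Proof.
by do 3!(apply: sumr_ge0 => ? _); rewrite -expr2 sqr_ge0.
Qed.

Lemma tinner_ttube (R : pzRingType) n1 n2 n3 (X : tensor R n1 n2 n3) i j :
  tinner (ttube X i j) (ttube X i j) = \sum_(k < n3) X i j k ^+ 2.
Proof. by rewrite /tinner !big_ord1; apply: eq_bigr => k _; rewrite expr2. Qed.

Section TSVDProperties.
Variable R : realType.
Variables m n1 n2 : nat.
Local Notation N := m.+1.
Variables (A : tensor R n1 n2 N) (U : tensor R n1 n1 N)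
          (S : tensor R n1 n2 N) (V : tensor R n2 n2 N).
Hypothesis decA : A = tprod (tprod U S) (tconj V).
Hypothesis orthU : tprod (tconj U) U = @tid R n1 N.
Hypothesis orthV : tprod (tconj V) V = @tid R n2 N.

Lemma tprod_AV : tprod A V = tprod U S.
Proof. by rewrite decA tprodA orthV tprod_tid. Qed.

Lemma tinner_rank1 (i : 'I_n1) (j : 'I_n2) (X : tensor R 1 1 N) :
  tinner (tprod (tprod (lslice U i) X) (tconj (lslice V j))) A
  = tinner X (ttube S i j).
Proof.
rewrite tinner_tprodr tconjK tprod_lslice tprod_AV tinner_tprodl.
congr tinner; apply: tensorP => a b k.
by rewrite /ttube -[in RHS](tid_tprod S) -orthU tprodA.
Qed.

Lemma tinner_tSVD : tinner A A = tinner S S.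
Proof.
by rewrite {1}decA tinner_tprodr tconjK tprod_AV tinner_tprodl -tprodA
  orthU tid_tprod.
Qed.

End TSVDProperties.

Lemma fdiag_tinner_le (R : realDomainType) n1 n2 n3 (S : tensor R n1 n2 n3)
  (T : R) :
  fdiag S -> (forall i j, val i = val j -> \sum_(k < n3) S i j k ^+ 2 <= T) ->
  tinner S S <= (minn n1 n2)%:R * T.
Proof.
move=> dS diag_le.
apply: (@le_trans _ _ (\sum_(i < n1) \sum_(j < n2) (val i == val j)%:R * T)).
  apply: ler_sum => i _; apply: ler_sum => j _.
  have [eij|nij] := eqVneq (val i) (val j).
    by rewrite mul1r; under eq_bigr do rewrite -expr2; exact: diag_le.
  by rewrite mul0r big1 // => k _; rewrite dS ?mulr0 //; apply/eqP.
rewrite -card_diag natr_sum mulr_suml.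
by under [X in _ <= X]eq_bigr do rewrite natr_sum mulr_suml.
Qed.

Lemma tSVD_tube_le (R : realType) m n1 n2 (S : tensor R n1 n2 m.+1)
  (i1 : 'I_n1) (j1 : 'I_n2) :
  val i1 = 0%N -> val j1 = 0%N ->
  (forall (i : 'I_n1) (j : 'I_n2) k, val i = val j -> 0 <= tdft S i j k) ->
  (forall (i i' : 'I_n1) (j j' : 'I_n2) k,
      val i = val j -> val i' = val j' -> (val i <= val i')%N ->
      tdft S i' j' k <= tdft S i j k) ->
  forall i j, val i = val j ->
    \sum_(k < m.+1) S i j k ^+ 2 <= \sum_(k < m.+1) S i1 j1 k ^+ 2.
Proof.
move=> hi1 hj1 spec_ge0 spec_ord i j eij.
apply: (@dft_energy_le R m (fun k => S i j k) (fun k => S i1 j1 k)) => k.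
  exact: spec_ge0.
by apply: spec_ord; rewrite ?hi1 ?hj1.
Qed.

Lemma tinner_normalized (R : rcfType) n3 (s : tensor R 1 1 n3) :
  tinner (fun a b k => s a b k / tfro s) s = tfro s.
Proof.
have -> : tinner (fun a b k => s a b k / tfro s) s = tinner s s / tfro s.
  rewrite /tinner !mulr_suml; apply: eq_bigr => ? _; rewrite !mulr_suml.
  by apply: eq_bigr => ? _; rewrite mulr_suml; apply: eq_bigr => ? _; rewrite mulrAC.
have [->|sn0] := eqVneq (tfro s) 0; first by rewrite invr0 mulr0.
by rewrite -[in LHS](sqr_sqrtr (tinner_ge0 s)) -/(tfro s) expr2 mulfK.
Qed.

Theorem lemma2p2 (R : realType) (n1 n2 n3 : nat)
  (A : tensor R n1 n2 n3) (U : tensor R n1 n1 n3) (S : tensor R n1 n2 n3)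
  (V : tensor R n2 n2 n3) (i1 : 'I_n1) (j1 : 'I_n2) :
  val i1 = 0%N -> val j1 = 0%N ->
  (exists i j k, A i j k != 0) ->
  tSVD A U S V ->
  let s := ttube S i1 j1 in
  let M1 := tprod (tprod (lslice U i1) (fun a b k => s a b k / tfro s))
                  (tconj (lslice V j1)) in
  tfro A / Num.sqrt (minn n1 n2)%:R <= tinner M1 A.
Proof.
move=> hi1 hj1 [_ [_ [k0 _]]] [[orthU _] [orthV _] dS decA [spec_ge0 spec_ord]].
(* A nonzero entry forces n3 > 0, so the index algebra of Z/n3Z applies. *)
have [m n3E] : exists m, n3 = m.+1.
  by exists n3.-1; rewrite prednK // (leq_ltn_trans _ (ltn_ord k0)).
subst n3; cbv zeta; set s := ttube S i1 j1.
have decA' : A = tprod (tprod U S) (tconj V) by apply: tensorP.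
have orthU' : tprod (tconj U) U = @tid R n1 m.+1 by apply: tensorP.
have orthV' : tprod (tconj V) V = @tid R n2 m.+1 by apply: tensorP.
have normS : tinner S S <= (minn n1 n2)%:R * tinner s s.
  by rewrite tinner_ttube; apply: fdiag_tinner_le => //; exact: tSVD_tube_le.
rewrite (tinner_rank1 decA' orthU' orthV') tinner_normalized.
have [->|mpos] := eqVneq (minn n1 n2) 0%N.
  by rewrite sqrtr0 invr0 mulr0 sqrtr_ge0.
rewrite ler_pdivrMr ?sqrtr_gt0 ?ltr0n ?lt0n // /tfro (tinner_tSVD decA') //.
by rewrite mulrC -sqrtrM ?ler0n // ler_sqrt // mulr_ge0 ?ler0n ?tinner_ge0.
Qed.
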